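(* Consider an instance of the Side-Access Compact Retrieval Problem, a feasible solution, a cycle $c$ of it, and the set $Y$ of targets retrieved in cycle $c$. List the distinct heights $\{h_c(b):b\in Y\}$ in increasing order as $h_1<\dots<h_p$ and let $s_i=\max\{s(b): b\in Y,\ h_c(b)=h_i\}$. Then there exists an index $\ell\in\{1,\dots,p\}$ such that $s_1\le s_2\le\dots\le s_\ell\ge s_{\ell+1}\ge\dots\ge s_p$.
   Context: A slice is a sequence of stacks $T=(1,\dots,m)$, indexed from the entry side (stack $1$) outward; ''left'' means smaller index. Stack $t$ initially consists of $h(t)\ge0$ unit loads (ULs) stacked without gaps; a UL at height $k$ has exactly $k$ ULs below it in its stack. A pick-list $\mathcal B$ of target ULs is given; target $b$ lies in stack $s(b)$ at initial height $h(b)$. Retrieval proceeds in cycles $c=1,2,\dots$; $h_c(t)$, $h_c(b)$ are the heights of stack $t$ and of a not-yet-retrieved target $b$ at the start of cycle $c$ ($h_1=h$). In cycle $c$ one chooses clearance levels $\ell_c(t)\in\{0,\dots,h_c(t)\}$: the top $e_c(t)=h_c(t)-\ell_c(t)$ ULs of stack $t$ are lifted for the whole cycle. Then a sequence $(b_{c,1},\dots,b_{c,k})$ of targets is retrieved, with residual heights $d_{c,0}=\ell_c$ and $d_{c,i}(t)=d_{c,i-1}(t)-1$ if $t=s(b_{c,i})$, else unchanged. Retrieving $b$ (stack $t$, height $h=h_c(b)$) as the $i$-th retrieval requires accessibility: (a) $d_{c,i-1}(t)=h+1$ and (b) $d_{c,i-1}(t')=h$ for all $t'<t$. Afterwards lifted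 ULs are lowered, $h_{c+1}(t)=d_{c,k}(t)+e_c(t)$, and each remaining target's height decreases by the number of targets retrieved in cycle $c$ below it in its stack. Non-targets are never removed. A solution is feasible if every target is retrieved exactly once and is accessible when retrieved. *)

From mathcomp Require Import all_boot.
Set Implicit Arguments. Unset Strict Implicit. Unset Printing Implicit Defensive.

(* Stacks are indexed by nat, stack t with 1 <= t <= m ("left" = smaller).
   Targets form a finite type B (the pick-list); s b is the stack of b,
   hb b its initial height.  A state (at the start of a cycle) is a pair
   (H, HT): H t = current height of stack t, HT b = current height of
   target b.  A cycle is a pair (l, Y): l t = clearance level of stack t,
   Y = the sequence of targets retrieved in that cycle, in order. *)

Section SACRP.
Variable B : finType.
Variable s : B -> nat.

Definition ret_state := ((nat -> nat) * (B -> nat))%type.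
Definition ret_cycle := ((nat -> nat) * seq B)%type.

Definition dres (l : nat -> nat) (pre : seq B) (t : nat) : nat :=
  l t - count (fun b => s b == t) pre.

Definition cycle_ok (m : nat) (st : ret_state) (cy : ret_cycle) : Prop :=
  let: (H, HT) := st in
  let: (l, Y) := cy in
  (forall t, 1 <= t <= m -> l t <= H t) /\
  (forall i, i < size Y ->
     forall b, b = nth b Y i ->
       dres l (take i Y) (s b) = (HT b).+1 /\
       (forall t', 1 <= t' < s b -> dres l (take i Y) t' = HT b)).

Definition next_state (st : ret_state) (cy : ret_cycle) : ret_state :=
  let: (H, HT) := st in
  let: (l, Y) := cy in
  (fun t => dres l Y t + (H t - l t),
   fun b => HT b - count (fun b' => (s b' == s b) && (HT b' < HT b)) Y).

(* state at the start of cycle c+1 (0-based c) *)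
Definition state_at (st0 : ret_state) (sol : seq ret_cycle) (c : nat) : ret_state :=
  foldl next_state st0 (take c sol).

Definition feasible (m : nat) (st0 : ret_state) (sol : seq ret_cycle) : Prop :=
  perm_eq (flatten (map snd sol)) (enum B) /\
  forall c, c < size sol -> forall cy, cy = nth cy sol c ->
    cycle_ok m (state_at st0 sol c) cy.

End SACRP.

From mathcomp Require Import all_boot.
From mathcomp Require Import zify.

Set Implicit Arguments.
Unset Strict Implicit.
Unset Printing Implicit Defensive.

(* Within a cycle each stack [t] is emptied from its clearance level [l t]
   downwards, one unit load at a time, so the heights retrieved from [t] form
   an interval ending at [l t - 1].  Accessibility of [b] moreover forces every
   stack left of [s b] to be cleared exactly down to [h(b)].  Hence if [z] and
   [x] are retrieved at heights [h(z) < h < h(x)], the interval of the stack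
   [minn (s x) (s z)] contains [h], so some target at height [h] lies in that
   stack.  The sequence [s_i] therefore has no strict valley, and a sequence
   without valleys increases up to its maximum and decreases afterwards. *)

Lemma split_at_count (T : Type) (P : pred T) (r : seq T) j :
  j < count P r ->
  exists r1 x r2, [/\ r = r1 ++ x :: r2, P x & count P r1 = j].
Proof.
elim: r j => [|a r IHr] j //=.
case Pa: (P a) => /=; first case: j => [|j] lt_j_r.
- by exists [::], a, r.
- have [r1 [x [r2 [-> Px <-]]]] := IHr j lt_j_r.
  by exists (a :: r1), x, r2; rewrite /= Pa.
- move=> lt_j_r; have [r1 [x [r2 [-> Px <-]]]] := IHr j lt_j_r.
  by exists (a :: r1), x, r2; rewrite /= Pa.
Qed.

Lemma mem_split (T : eqType) (x : T) (r : seq T) :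
  x \in r -> exists r1 r2, r = r1 ++ x :: r2.
Proof. by case/splitPr=> r1 r2; exists r1, r2. Qed.

Lemma gtn_bigmax_seq (I : eqType) (r : seq I) (P : pred I) (F : I -> nat) m :
  m < \max_(i <- r | P i) F i -> exists2 i, i \in r & P i && (m < F i).
Proof.
move=> lt_m_max; apply/hasP; apply: contraLR lt_m_max => /hasPn noF.
rewrite -leqNgt; apply/bigmax_leqP_seq => i ri Pi.
by move: (noF i ri); rewrite Pi /= -leqNgt.
Qed.

Lemma unimodal_of_quasiconcave (f : nat -> nat) p : 0 < p ->
  (forall i j k, i < j < k -> k < p -> minn (f i) (f k) <= f j) ->
  exists l, l < p /\ (forall i, i < l -> f i <= f i.+1) /\
    (forall i, l <= i -> i.+1 < p -> f i.+1 <= f i).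
Proof.
move=> p_gt0 f_qc.
case: (arg_maxnP (fun i : 'I_p => f i) (isT : xpredT (Ordinal p_gt0))).
move=> [l lt_l_p] _ /= l_max.
have f_le_l i : i < p -> f i <= f l by move=> lt_ip; apply: (l_max (Ordinal lt_ip)).
exists l; split=> //; split=> i.
- move=> lt_il; have [lt_i1_l | eq_i1_l] : i.+1 < l \/ i.+1 = l by lia.
  + have := f_qc i i.+1 l ltac:(lia) lt_l_p.
    by rewrite (minn_idPl (f_le_l i _)) //; lia.
  + by subst l; apply: f_le_l; lia.
- move=> le_li lt_i1_p; have [lt_li | eq_li] : l < i \/ l = i by lia.
  + have := f_qc l i i.+1 ltac:(lia) lt_i1_p.
    by rewrite (minn_idPr (f_le_l _ lt_i1_p)).
  + by subst l; apply: f_le_l; lia.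
Qed.

Section OneCycle.

Variables (B : finType) (s : B -> nat) (lv : nat -> nat) (HT : B -> nat).
Variable Y : seq B.
Hypothesis s_gt0 : forall b, 0 < s b.
Hypothesis Y_accessible : forall i, i < size Y -> forall b, b = nth b Y i ->
  dres s lv (take i Y) (s b) = (HT b).+1 /\
  (forall t, 1 <= t < s b -> dres s lv (take i Y) t = HT b).

Lemma accessible_cat Y1 b Y2 : Y = Y1 ++ b :: Y2 ->
  lv (s b) - count (fun b' => s b' == s b) Y1 = (HT b).+1 /\
  (forall t, 1 <= t < s b -> lv t - count (fun b' => s b' == t) Y1 = HT b).
Proof.
move=> EY; have lt_Y1_Y : size Y1 < size Y by rewrite EY size_cat /= addnS ltnS leq_addr.
have := @Y_accessible (size Y1) lt_Y1_Y b.
by rewrite /dres EY take_size_cat // nth_cat ltnn subnn; apply.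
Qed.

Lemma retrieved_from_stack t h :
  lv t - count (fun b => s b == t) Y <= h < lv t ->
  exists2 w, w \in Y & (s w == t) && (HT w == h).
Proof.
move=> h_range.
have [Y1 [w [Y2 [EY /eqP sw_t cnt]]]] :=
  @split_at_count _ (fun b => s b == t) Y (lv t - h.+1) ltac:(lia).
exists w; first by rewrite EY mem_cat mem_head orbT.
have [HTw _] := accessible_cat EY.
rewrite sw_t cnt in HTw.
by rewrite sw_t eqxx /=; apply/eqP; lia.
Qed.

Lemma retrieved_between x z h : x \in Y -> z \in Y -> HT z < h < HT x ->
  exists2 w, w \in Y & (HT w == h) && (s w == minn (s x) (s z)).
Proof.
move=> /mem_split[X1 [X2 EX]] /mem_split[Z1 [Z2 EZ]] /andP[gt_hz lt_hx].
have [HTx left_x] := accessible_cat EX; have [HTz left_z] := accessible_cat EZ.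
have cnt_prefix Y1 b Y2 t : Y = Y1 ++ b :: Y2 ->
    count (fun b' => s b' == t) Y1 <= count (fun b' => s b' == t) Y.
  by move=> ->; rewrite count_cat leq_addr.
have [le_zx | lt_xz] := leqP (s z) (s x).
- (* [x] sees stack [s z] cleared at level at least [h(x)]; [z] comes from
     below [h] in the same stack *)
  have lv_ge : HT x <= lv (s z).
    have [eq_zx | lt_zx] : s z = s x \/ s z < s x by lia.
    + by move: HTx; rewrite -eq_zx; lia.
    + by have := left_x (s z) ltac:(have := s_gt0 z; lia); lia.
  have cnt_z := cnt_prefix _ _ _ (s z) EZ.
  have [w Yw /andP[/eqP sw /eqP HTw]] := @retrieved_from_stack (s z) h ltac:(lia).
  by exists w; rewrite // HTw sw !eqxx.
- (* [x] comes from stack [s x] above [h]; retrieving [z] requires [s x] to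
     be cleared down to [h(z)] *)
  have cnt_x := cnt_prefix _ _ _ (s x) EX; have cnt_zx := cnt_prefix _ _ _ (s x) EZ.
  have cleared_x := left_z (s x) ltac:(have := s_gt0 x; lia).
  have [w Yw /andP[/eqP sw /eqP HTw]] := @retrieved_from_stack (s x) h ltac:(lia).
  by exists w; rewrite // HTw sw !eqxx.
Qed.

Definition max_stack_at (h : nat) : nat := \max_(b <- Y | HT b == h) s b.

Lemma max_stack_at_quasiconcave hi hj hk : hi < hj < hk ->
  minn (max_stack_at hi) (max_stack_at hk) <= max_stack_at hj.
Proof.
move=> /andP[lt_ij lt_jk]; rewrite leqNgt; apply/negP => valley.
have [z Yz /andP[/eqP HTz gt_z]] :=
  gtn_bigmax_seq (leq_trans valley (geq_minl _ _)).
have [x Yx /andP[/eqP HTx gt_x]] :=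
  gtn_bigmax_seq (leq_trans valley (geq_minr _ _)).
have [w Yw /andP[HTw /eqP sw]] := @retrieved_between x z hj Yx Yz
  ltac:(by rewrite HTz HTx lt_ij lt_jk).
have : s w <= max_stack_at hj := leq_bigmax_seq (P := fun b => HT b == hj) w Yw HTw.
by rewrite sw; lia.
Qed.

End OneCycle.

Theorem lemma3 (m : nat) (h0 : nat -> nat) (B : finType)
  (s : B -> nat) (hb : B -> nat)
  (Hs : forall b, 1 <= s b <= m)
  (Hhb : forall b, hb b < h0 (s b))
  (Hpos : forall b b', s b = s b' -> hb b = hb b' -> b = b')
  (sol : seq (ret_cycle B))
  (Hfeas : feasible s m (h0, hb) sol)
  (c : nat) (Hc : c < size sol) (cy : ret_cycle B) (Hcy : cy = nth cy sol c)
  (HY : cy.2 <> [::]) :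
  let HT := (state_at s (h0, hb) sol c).2 in
  let Y := cy.2 in
  let hs := sort leq (undup [seq HT b | b <- Y]) in
  let p := size hs in
  let si := fun i => \max_(b <- Y | HT b == nth 0 hs i) s b in
  exists l, l < p /\
    (forall i, i < l -> si i <= si i.+1) /\
    (forall i, l <= i -> i.+1 < p -> si i.+1 <= si i).
Proof.
have := Hfeas.2 c Hc cy Hcy.
case: (state_at s (h0, hb) sol c) => ? HT; case: cy {Hcy} HY => lv Y /= Y_nil [_ Y_acc].
have s_gt0 b : 0 < s b by case/andP: (Hs b).
set hs := sort leq _.
have hs_sorted : sorted ltn hs.
  by rewrite ltn_sorted_uniq_leq sort_uniq undup_uniq sort_sorted //; apply: leq_total.
have [b Yb] : exists b, b \in Y by case: (Y) Y_nil => // b Y' _; exists b; apply: mem_head.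
have hs_gt0 : 0 < size hs.
  have : HT b \in hs by rewrite mem_sort mem_undup map_f.
  by case: (hs).
apply: (unimodal_of_quasiconcave hs_gt0) => i j k /andP[lt_ij lt_jk] lt_k.
have nth_lt a a' : a < a' < size hs -> nth 0 hs a < nth 0 hs a'.
  by move=> /andP[lt_a lt_a']; apply: (sorted_ltn_nth ltn_trans 0 hs_sorted);
    rewrite ?inE //; lia.
apply: (max_stack_at_quasiconcave s_gt0 Y_acc).
by rewrite !nth_lt ?lt_ij ?lt_jk ?lt_k //; lia.
Qed.
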